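(* Let $\mathcal{N}$ be a Beeping Network with $n$ nodes and maximum degree $\Delta$, with unique IDs from $[1,n^c]$ for a constant $c\ge1$, where each node knows $n$, $c$, $\Delta$, $h$ and an upper bound $B$ on the size in bits of each input message. There is a deterministic distributed algorithm solving the $B$-bit $h$-hop simulation problem on $\mathcal{N}$ in $O(h\cdot B\Delta^{h+2}\,\mathrm{polylog}\, n)$ rounds.
   Context: A Beeping Network is a network of $n$ nodes whose topology is an undirected graph $G=(V,E)$. Time is divided into synchronous rounds and all nodes start simultaneously. In each round every node either beeps or listens; a listening node hears ''silence'' if no neighbor beeps and ''noise'' if at least one neighbor beeps, and cannot distinguish one beep from several. $B$-bit $h$-hop simulation: each node holds messages (possibly different for different destinations) of at most $B$ bits addressed to other nodes, and must deliver each such message to its destination whenever the destination is within distance $h$ (hops) of the source; messages to nodes at distance more than $h$ need not be delivered. $\mathrm{polylog}\, n$ denotes a fixed polylogarithmic function of $n$. *)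

From mathcomp Require Import all_boot.
Set Implicit Arguments. Unset Strict Implicit. Unset Printing Implicit Defensive.

Definition msg := seq bool.

(* Input of a node: for each destination ID, possibly a message addressed
   to it (None = no message for that destination). *)
Definition input := nat -> option msg.

(* Output of a node: for each source ID, the message it learned from that
   source (None = no message). *)
Definition output := nat -> option msg.

Record params := Params { p_n : nat; p_c : nat; p_Delta : nat; p_h : nat; p_B : nat }.

(* In every round a node
   decides whether to beep from the known parameters, its ID, its input and
   the history of what it heard in the previous rounds. *)
Record algorithm := Algorithm {
  rounds : params -> nat;
  act    : params -> nat -> input -> seq bool -> bool;  (* true = beep *)
  out    : params -> nat -> input -> seq bool -> output }.

Section Execution.
Variables (n : nat) (e : rel 'I_n) (A : algorithm) (P : params)
          (id : 'I_n -> nat) (inp : 'I_n -> input).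

(* hist r v = what node v heard in rounds 0 .. r-1 (true = noise).  A node
   that beeps does not listen (records false); a listening node hears noise
   iff at least one neighbour beeps. *)
Fixpoint hist (r : nat) (v : 'I_n) : seq bool :=
  match r with
  | 0 => [::]
  | r'.+1 =>
      let beeps w := act A P (id w) (inp w) (hist r' w) in
      rcons (hist r' v) (~~ beeps v && [exists w, e v w && beeps w])
  end.

Definition final_output (v : 'I_n) : output :=
  out A P (id v) (inp v) (hist (rounds A P) v).
End Execution.

Definition simple_graph (n : nat) (e : rel 'I_n) :=
  symmetric e /\ irreflexive e.

Definition degree (n : nat) (e : rel 'I_n) (v : 'I_n) := #|[set w | e v w]|.

Definition max_degree (n : nat) (e : rel 'I_n) := \max_(v : 'I_n) degree e v.

Definition within_dist (n : nat) (e : rel 'I_n) (h : nat) (u v : 'I_n) :=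
  exists p : seq 'I_n, [/\ path e u p, last u p = v & size p <= h].

(* log2 n (floor); polylog n is rendered as (log2 n + 1)^k. *)
Definition log2 (n : nat) := trunc_log 2 n.

From mathcomp Require Import all_boot all_order all_algebra finfield zify.
Set Implicit Arguments. Unset Strict Implicit. Unset Printing Implicit Defensive.
Import GRing.Theory.

(* Every node runs 2h phases, each simulating one round of local broadcast in
   which a node sends a list of at most 4 Delta^h items (source ID, destination
   ID, message) to all its neighbours.  In the first h phases IDs are flooded,
   so that after r phases a node knows the IDs of its r-ball.  Each node then
   turns every message addressed to a node of its h-ball into an item, and in
   the last h phases items are flooded, a node keeping an item only if its
   destination lies within the remaining number of hops.  A node thus holds
   at most |ball t| * |ball (h - t)| <= 4 Delta^h items, and an item follows
   every shortest path to its destination.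

   A phase consists of #|F|^2 = O((Delta W)^2) slots, where W = c (log n + 1)
   bounds the length of IDs and F is a field with Delta W < #|F|: the node
   with ID x transmits in slot (a, b) when the polynomial whose coefficients
   are the bits of x takes the value b at a.  Distinct such polynomials agree
   on fewer than W points, so for each edge some slot contains the sender but
   neither the receiver nor its other neighbours.  In its slots a node beeps
   the Manchester code of its list, from which a listener can only decode the
   list of a transmitting neighbour, and does so when that neighbour is the
   only transmitter. *)

(** * Selective families from polynomial codes *)

Fixpoint bits (W a : nat) : seq bool :=
  if W is W'.+1 then odd a :: bits W' a./2 else [::].

Fixpoint unbits (s : seq bool) : nat :=
  if s is b :: s' then b + (unbits s').*2 else 0.

Lemma size_bits W a : size (bits W a) = W.
Proof. by elim: W a => //= W IH a; rewrite IH. Qed.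

Lemma bitsK W a : a < 2 ^ W -> unbits (bits W a) = a.
Proof.
elim: W a => [|W IH] a /=; first by rewrite expn0 ltnS leqn0 => /eqP.
by move=> lt_a; rewrite IH ?odd_double_half // ltn_half_double -mul2n -expnS.
Qed.

Lemma card_roots (F : finFieldType) (r : {poly F}) :
  r != 0%R -> #|[set a : F | root r a]| < size r.
Proof.
move=> nz_r; rewrite cardE; apply: max_poly_roots nz_r _ (enum_uniq _).
by apply/allP=> a; rewrite mem_enum inE.
Qed.

Section PolynomialSelection.
Variables (F : finFieldType) (W : nat).

Definition poly_code (x : nat) : {poly F} :=
  Poly [seq (nat_of_bool b)%:R%R | b <- bits W x].

Lemma size_poly_code x : size (poly_code x) <= W.
Proof. by rewrite (leq_trans (size_Poly _)) // size_map size_bits. Qed.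

Lemma poly_code_inj x y :
  x < 2 ^ W -> y < 2 ^ W -> poly_code x = poly_code y -> x = y.
Proof.
move=> ltx lty eq_code; rewrite -(bitsK ltx) -(bitsK lty); congr unbits.
apply: (@eq_from_nth _ false) => [|i]; rewrite ?size_bits // => lt_iW.
have /eqP := congr1 (fun p : {poly F} => (p`_i)%R) eq_code.
rewrite /= !coef_Poly !(nth_map false) ?size_bits //.
case: (nth false (bits W x) i) (nth false (bits W y) i) => [] [] //=.
  by rewrite oner_eq0.
by rewrite eq_sym oner_eq0.
Qed.

Lemma card_poly_agree (p : {poly F}) (qs : seq {poly F}) :
  size p <= W -> all (fun q : {poly F} => size q <= W) qs -> p \notin qs ->
  #|[set a | has (fun q => (p.[a] == q.[a])%R) qs]| <= size qs * W.-1.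
Proof.
move=> szp; elim: qs => [|q qs IH] /=.
  by move=> _ _; rewrite (eq_card0 (A := [set a : F | false])) // => a; rewrite inE.
case/andP=> szq szqs; rewrite in_cons negb_or => /andP [neq_pq p_qs].
have nz_pq : (p - q != 0)%R by rewrite subr_eq0.
have sz_pq : size (p - q)%R <= W.
  by rewrite (leq_trans (size_polyD _ _)) // geq_max size_polyN szp.
apply: leq_trans (_ : #|[set a | root (p - q)%R a] :|:
                       [set a | has (fun q => (p.[a] == q.[a])%R) qs]| <= _).
  apply: subset_leq_card; apply/subsetP=> a; rewrite !inE.
  case/orP=> [eq_a|->]; last by rewrite orbT.
  by rewrite /root hornerD hornerN subr_eq0 eq_a.
rewrite mulSn; apply: leq_trans (leq_card_setU _ _) _; rewrite leq_add ?IH //.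
by rewrite -ltnS (leq_trans (card_roots nz_pq)) // (leq_trans sz_pq) // leqSpred.
Qed.

Definition poly_select (j x : nat) : bool :=
  let ab := nth (0, 0)%R (enum {: F * F}) j in ((poly_code x).[ab.1] == ab.2)%R.

Lemma poly_select_separates D x Y :
  D * W < #|F| -> x < 2 ^ W -> all (fun y => y < 2 ^ W) Y -> size Y <= D -> x \notin Y ->
  exists2 j, j < #|F| ^ 2 & poly_select j x && all (fun y => ~~ poly_select j y) Y.
Proof.
move=> DW_lt_F ltx ltY szY xY; set qs := map poly_code Y.
have x_qs : poly_code x \notin qs.
  apply/mapP=> -[y yY /(poly_code_inj ltx (allP ltY y yY)) eq_xy].
  by rewrite eq_xy yY in xY.
have szqs : all (fun q : {poly F} => size q <= W) qs.
  by apply/allP=> _ /mapP [y _ ->]; apply: size_poly_code.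
have /card_gt0P [a] : 0 < #|~: [set a | has (fun q => ((poly_code x).[a] == q.[a])%R) qs]|.
  rewrite cardsCs setCK subn_gt0.
  rewrite (leq_ltn_trans (card_poly_agree (size_poly_code x) szqs x_qs)) //.
  by rewrite (leq_ltn_trans _ DW_lt_F) // size_map leq_mul // leq_pred.
rewrite !inE => /hasPn agree_a.
have ab_enum : (a, (poly_code x).[a])%R \in enum {: F * F} by rewrite mem_enum.
exists (index (a, (poly_code x).[a])%R (enum {: F * F})).
  by rewrite -mulnn -card_prod cardE index_mem.
rewrite /poly_select nth_index //= eqxx; apply/allP=> y yY.
by apply: contraNN (agree_a _ (map_f poly_code yY)) => /eqP ->.
Qed.

End PolynomialSelection.

Definition binary_field (k : nat) : finFieldType :=
  s2val (pPrimePowerField (isT : prime 2) (ltn0Sn k)).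

Lemma card_binary_field k : #|binary_field k| = 2 ^ k.+1.
Proof. exact: s2valP' (pPrimePowerField _ _). Qed.

(** * Fixed-width encodings *)

Definition enc_msg (B : nat) (m : seq bool) : seq bool :=
  mkseq (fun i => i < size m) B ++ mkseq (nth false m) B.

Definition dec_msg (B : nat) (s : seq bool) : seq bool :=
  take (count id (take B s)) (drop B s).

Lemma size_enc_msg B m : size (enc_msg B m) = B + B.
Proof. by rewrite size_cat !size_mkseq. Qed.

Lemma count_unary B k : k <= B -> count id (mkseq (fun i => i < k) B) = k.
Proof.
move=> le_kB; rewrite /mkseq count_map -(subnKC le_kB) iotaD count_cat add0n.
rewrite (eq_in_count (a2 := predT)) ?count_predT ?size_iota; last first.
  by move=> i; rewrite mem_iota add0n => /andP [_ lt_ik] /=.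
rewrite (eq_in_count (a2 := pred0)) ?count_pred0 ?addn0 // => i.
by rewrite mem_iota => /andP [le_ki _] /=; rewrite ltnNge le_ki.
Qed.

Lemma enc_msgK B m : size m <= B -> dec_msg B (enc_msg B m) = m.
Proof.
move=> szm; rewrite /dec_msg /enc_msg take_size_cat ?size_mkseq //.
rewrite drop_size_cat ?size_mkseq // count_unary //.
apply: (@eq_from_nth _ false) => [|i]; rewrite size_takel ?size_mkseq // => lt_im.
by rewrite nth_take // nth_mkseq // (leq_trans lt_im szm).
Qed.

Definition item := (nat * nat * msg)%type.

Definition enc_item (W B : nat) (t : item) : seq bool :=
  bits W t.1.1 ++ bits W t.1.2 ++ enc_msg B t.2.

Definition dec_item (W B : nat) (s : seq bool) : item :=
  (unbits (take W s), unbits (take W (drop W s)), dec_msg B (drop (W + W) s)).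

Lemma size_enc_item W B t : size (enc_item W B t) = 2 * W + 2 * B.
Proof. by rewrite /enc_item size_cat size_bits size_cat size_bits size_enc_msg; lia. Qed.

Definition item_fits (W B : nat) (t : item) :=
  [&& t.1.1 < 2 ^ W, t.1.2 < 2 ^ W & size t.2 <= B].

Lemma enc_itemK W B t : item_fits W B t -> dec_item W B (enc_item W B t) = t.
Proof.
case: t => [[a b] m] /and3P [lt_a lt_b szm]; rewrite /dec_item /enc_item /=.
rewrite take_size_cat ?size_bits // bitsK // drop_size_cat ?size_bits //.
rewrite take_size_cat ?size_bits // bitsK // -drop_drop.
by rewrite !drop_size_cat ?size_bits // enc_msgK.
Qed.

Fixpoint enc_list (K wd : nat) (xs : seq (seq bool)) : seq bool :=
  if K is K'.+1 then
    match xs with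
    | [::] => false :: nseq wd false ++ enc_list K' wd [::]
    | x :: xs' => true :: take wd (x ++ nseq wd false) ++ enc_list K' wd xs'
    end
  else [::].

Fixpoint dec_list (K wd : nat) (s : seq bool) : seq (seq bool) :=
  if K is K'.+1 then
    (if head false s then [:: take wd (behead s)] else [::]) ++ dec_list K' wd (drop wd.+1 s)
  else [::].

Lemma size_enc_list K wd xs : size (enc_list K wd xs) = K * wd.+1.
Proof.
elim: K xs => //= K IH [|x xs] /=; rewrite size_cat IH ?size_nseq //.
by rewrite size_takel // size_cat size_nseq leq_addl.
Qed.

Lemma enc_list_nilK K wd : dec_list K wd (enc_list K wd [::]) = [::].
Proof. by elim: K => //= K IH; rewrite drop_size_cat ?size_nseq. Qed.

Lemma enc_listK K wd xs : size xs <= K -> all (fun x => size x == wd) xs ->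
  dec_list K wd (enc_list K wd xs) = xs.
Proof.
elim: K xs => [|K IH] [|x xs] //=; first by move=> _ _; apply: enc_list_nilK K.+1 wd.
rewrite ltnS => szxs /andP [/eqP szx allxs].
by rewrite take_size_cat // take_size_cat // drop_size_cat // IH.
Qed.

(** * Manchester coding *)

(* When several
   codewords are superimposed by OR, a decoded pair is complementary only if
   all transmitters agree on that bit, so decoding fails unless all
   transmitted messages coincide. *)
Definition manchester (s : seq bool) (i : nat) : bool :=
  if odd i then ~~ nth false s i./2 else nth false s i./2.

Definition manchester_decode (L : nat) (g : seq bool) : option (seq bool) :=
  if all (fun i => nth false g i.*2 != nth false g i.*2.+1) (iota 0 L)
  then Some (mkseq (fun i => nth false g i.*2) L) else None.

Lemma manchester_even s i : manchester s i.*2 = nth false s i.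
Proof. by rewrite /manchester odd_double doubleK. Qed.

Lemma manchester_odd s i : manchester s i.*2.+1 = ~~ nth false s i.
Proof. by rewrite /manchester /= odd_double /= uphalf_double. Qed.

Section Superposition.
Variables (T : finType) (tr : pred T) (M : T -> seq bool) (L : nat) (g : seq bool).
Hypothesis size_M : forall w, tr w -> size (M w) = L.
Hypothesis g_or : forall i, i < L.*2 -> nth false g i = [exists w, tr w && manchester (M w) i].

Lemma manchester_decode_sound s :
  0 < L -> manchester_decode L g = Some s -> exists2 w, tr w & M w = s.
Proof.
move=> L_gt0; rewrite /manchester_decode; case: ifP => // /allP complementary [<-].
have compl i : i < L -> nth false g i.*2 != nth false g i.*2.+1.
  by move=> lt_iL; apply: complementary; rewrite mem_iota add0n lt_iL.
have decoded w : tr w -> M w = mkseq (fun i => nth false g i.*2) L.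
  move=> tr_w; apply: (@eq_from_nth _ false) => [|i]; rewrite ?size_mkseq ?size_M //.
  move=> lt_iL.
  rewrite nth_mkseq // g_or ?ltn_double //.
  case Mwi: (nth false (M w) i).
    by apply/esym/existsP; exists w; rewrite tr_w manchester_even Mwi.
  have := compl i lt_iL; rewrite !g_or ?ltn_double ?ltn_Sdouble //.
  have -> : [exists w, tr w && manchester (M w) i.*2.+1].
    by apply/existsP; exists w; rewrite tr_w manchester_odd Mwi.
  by case: [exists w, _].
have : nth false g 0 || nth false g 1.
  by have := compl 0 L_gt0; case: (nth _ _ 0); case: (nth _ _ 1).
rewrite !g_or -?addnn; try lia.
by case/orP=> /existsP [w /andP [tr_w _]]; exists w => //; apply: decoded.
Qed.

Lemma manchester_decode_single w0 :
  tr w0 -> (forall w, tr w -> w = w0) -> manchester_decode L g = Some (M w0).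
Proof.
move=> tr_w0 uniq_w0.
have g_w0 i : i < L.*2 -> nth false g i = manchester (M w0) i.
  move=> lt_i; rewrite g_or //; apply/existsP/idP => [[w /andP [tr_w]]|Mi].
    by rewrite (uniq_w0 _ tr_w).
  by exists w0; rewrite tr_w0.
rewrite /manchester_decode.
have -> : all (fun i => nth false g i.*2 != nth false g i.*2.+1) (iota 0 L).
  apply/allP=> i; rewrite mem_iota add0n => /= lt_iL.
  by rewrite !g_w0 ?ltn_double ?ltn_Sdouble // manchester_even manchester_odd; case: nth.
congr Some; apply: (@eq_from_nth _ false) => [|i]; rewrite size_mkseq ?size_M // => lt_iL.
by rewrite nth_mkseq // g_w0 ?ltn_double // manchester_even.
Qed.

End Superposition.

(** * Balls *)

Lemma card_bigcup_le (I T : finType) (S : {pred I}) (F : I -> {set T}) :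
  #|\bigcup_(x in S) F x| <= \sum_(x in S) #|F x|.
Proof.
elim/big_rec2: _ => [|x U k _ IH]; first by rewrite cards0.
by apply: leq_trans (leq_card_setU _ _) _; rewrite leq_add2l.
Qed.

Lemma sum_expn_le2 D r : 1 < D -> \sum_(i < r.+1) D ^ i <= 2 * D ^ r.
Proof.
move=> D_gt1; elim: r => [|r IH]; first by rewrite big_ord_recr big_ord0.
rewrite big_ord_recr /= expnS; apply: leq_trans (leq_add IH (leqnn _)) _.
have : 2 * D ^ r <= D * D ^ r by rewrite leq_mul2r D_gt1 orbT.
lia.
Qed.

Section Balls.
Variables (n : nat) (e : rel 'I_n).

Fixpoint ball (r : nat) (w : 'I_n) : {set 'I_n} :=
  if r is r'.+1 then ball r' w :|: \bigcup_(x | e w x) ball r' x else [set w].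

Lemma ball_self r w : w \in ball r w.
Proof. by elim: r => [|r IH] /=; rewrite inE ?IH. Qed.

Lemma ball_subS r w : ball r w \subset ball r.+1 w.
Proof. exact: subsetUl. Qed.

Lemma ball_sub_nbr r w x : e w x -> ball r x \subset ball r.+1 w.
Proof. by move=> e_wx; apply: subset_trans (subsetUr _ _); apply: bigcup_sup. Qed.

Lemma within_dist_rcons r w x v :
  within_dist e r w x -> e x v -> within_dist e r.+1 w v.
Proof.
case=> p [p_path p_last szp] e_xv; exists (rcons p v).
by rewrite rcons_path p_path p_last last_rcons size_rcons.
Qed.

Lemma within_distSr r w v : within_dist e r.+1 w v ->
  within_dist e r w v \/ exists2 x, within_dist e r w x & e x v.
Proof.
case=> p []; case/lastP: p => [|p z]; first by move=> _ /= <- _; left; exists [::].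
rewrite rcons_path last_rcons size_rcons ltnS => /andP [p_path e_z] <- szp.
by right; exists (last w p) => //; exists p.
Qed.

Lemma within_dist_neq r w v :
  within_dist e r w v -> w != v -> 0 < r /\ exists x, e w x.
Proof.
case=> -[|x p] [/= p_path p_last szp]; first by rewrite p_last eqxx.
by case/andP: p_path => e_wx _ _; split; [exact: leq_trans szp | exists x].
Qed.

Lemma mem_ball r w v : v \in ball r w <-> within_dist e r w v.
Proof.
split.
  elim: r w => [|r IH] w /=; first by rewrite inE => /eqP ->; exists [::].
  rewrite inE => /orP [/IH [p [p_path p_last szp]]|].
    by exists p; split => //; apply: leqW.
  case/bigcupP=> x e_wx /IH [p [p_path p_last szp]].
  by exists (x :: p); split => //=; rewrite e_wx.
elim: r w => [|r IH] w [[|x p] [/= p_path p_last szp]] //.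
- by rewrite -p_last inE.
- by rewrite -p_last; apply: (ball_self r.+1).
case/andP: p_path => e_wx p_path.
by apply: (subsetP (ball_sub_nbr r e_wx)); apply: IH; exists p.
Qed.

Definition sphere (r : nat) (w : 'I_n) : {set 'I_n} :=
  if r is r'.+1 then ball r w :\: ball r' w else [set w].

Lemma sphereS_sub r w : sphere r.+1 w \subset \bigcup_(x in sphere r w) [set y | e x y].
Proof.
apply/subsetP=> v; rewrite [sphere r.+1 w]/sphere in_setD => /andP [v_out].
case/mem_ball/within_distSr => [/mem_ball|[x /mem_ball x_in e_xv]].
  by rewrite (negbTE v_out).
apply/bigcupP; exists x; last by rewrite inE.
case: r v_out x_in => [|r] v_out x_in //.
rewrite /sphere in_setD x_in andbT; apply: contra v_out => /mem_ball x_in'.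
exact/mem_ball/(within_dist_rcons x_in').
Qed.

Lemma ball_sub_spheres r w : ball r.+1 w \subset ball r w :|: sphere r.+1 w.
Proof. by apply/subsetP=> v v_in; rewrite in_setU /sphere in_setD v_in andbT orbN. Qed.

Variable D : nat.
Hypothesis deg_le : forall x, #|[set y | e x y]| <= D.

Lemma card_sphere r w : #|sphere r w| <= D ^ r.
Proof.
elim: r => [|r IH]; first by rewrite cards1.
apply: leq_trans (subset_leq_card (sphereS_sub r w)) _.
apply: leq_trans (card_bigcup_le _ _) _.
apply: leq_trans (_ : \sum_(x in sphere r w) D <= _); first exact: leq_sum.
by rewrite sum_nat_const expnS mulnC leq_mul.
Qed.

Lemma card_ball_le_spheres r w : #|ball r w| <= \sum_(i < r.+1) #|sphere i w|.
Proof.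
elim: r => [|r IH]; first by rewrite big_ord_recr big_ord0.
rewrite big_ord_recr /=; apply: leq_trans (subset_leq_card (ball_sub_spheres r w)) _.
by apply: leq_trans (leq_card_setU _ _) _; rewrite leq_add2r.
Qed.

Hypothesis e_sym : symmetric e.

Lemma ball_sub_nbhd r w : D <= 1 -> ball r w \subset w |: [set y | e w y].
Proof.
move=> D_le1; elim: r w => [|r IH] w /=; first by rewrite sub1set setU11.
rewrite subUset IH /=; apply/bigcupsP=> x e_wx; apply: subset_trans (IH x) _.
have nbr_x : [set y | e x y] \subset [set w].
  apply/subsetP=> y; rewrite !inE => e_xy; apply/eqP.
  have /card_le1_eqP := leq_trans (deg_le x) D_le1; apply; rewrite inE //.
  by rewrite e_sym.
by rewrite subUset sub1set !inE e_wx orbT (subset_trans nbr_x) // sub1set setU11.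
Qed.

Lemma card_ball r w : 0 < D -> #|ball r w| <= 2 * D ^ r.
Proof.
move=> D_gt0; case: (ltnP 1 D) => [D_gt1|D_le1].
  apply: leq_trans (card_ball_le_spheres r w) _.
  apply: leq_trans (sum_expn_le2 r D_gt1); apply: leq_sum => i _; exact: card_sphere.
have -> : D = 1 by lia.
rewrite exp1n muln1; apply: leq_trans (subset_leq_card (ball_sub_nbhd r w D_le1)) _.
apply: leq_trans (leq_card_setU _ _) _.
by rewrite cards1 add1n ltnS (leq_trans (deg_le w)).
Qed.

End Balls.

(** * The algorithm *)

Section Execution.
Variables (n : nat) (e : rel 'I_n) (A : algorithm) (P : params)
          (id : 'I_n -> nat) (inp : 'I_n -> input).

Local Notation hist := (hist e A P id inp).

Definition beeps (r : nat) (w : 'I_n) : bool := act A P (id w) (inp w) (hist r w).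

Lemma size_hist r v : size (hist r v) = r.
Proof. by elim: r => //= r IH; rewrite size_rcons IH. Qed.

Lemma take_hist m r v : m <= r -> take m (hist r v) = hist m v.
Proof.
elim: r => [|r IH]; first by rewrite leqn0 => /eqP ->.
rewrite leq_eqVlt => /orP [/eqP ->|]; first by rewrite take_oversize // size_hist.
by rewrite ltnS => le_mr; rewrite /= -cats1 takel_cat ?IH ?size_hist.
Qed.

Lemma nth_hist r R v : r < R ->
  nth false (hist R v) r = ~~ beeps r v && [exists w, e v w && beeps r w].
Proof.
move=> lt_rR; rewrite -(nth_take _ (ltnSn r)) take_hist //= nth_rcons size_hist.
by rewrite ltnn eqxx.
Qed.

End Execution.

Section Algorithm.
Variable P : params.
Local Notation Delta := (p_Delta P).
Local Notation h := (p_h P).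
Local Notation B := (p_B P).

Definition id_width := p_c P * (log2 (p_n P)).+1.
Definition slot_field := binary_field (trunc_log 2 (Delta * id_width)).
Definition nslots := #|slot_field| ^ 2.
Definition transmits : nat -> nat -> bool := poly_select slot_field id_width.
Definition max_items := 4 * Delta ^ h.
Definition item_width := 2 * id_width + 2 * B.
Definition frame_len := max_items * item_width.+1.
Definition slot_len := frame_len.*2.
Definition phase_len := nslots * slot_len.
Definition nphases := 2 * h.
Definition nrounds := if (B == 0) || (Delta == 0) then 0 else nphases * phase_len.

(* Layer [r] of a state lists the IDs within distance [r] (filled during the
   first [h] phases); the pool holds the items in transit, as triples
   (source ID, destination ID, message). *)
Record state := State { layers : seq (seq nat); pool : seq item }.

Definition init_pool (i : nat) (inp : input) (ls : seq (seq nat)) : seq item :=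
  undup (pmap (fun d => omap (fun m => (i, d, m)) (inp d)) (nth [::] ls h)).

(* After pool phase [p], an item has [h.*2 - p.+1 = h - (p.+1 - h)] hops left. *)
Definition update (i : nat) (inp : input) (p : nat) (st : state) (rcv : seq item) : state :=
  if p < h then
    let ls := rcons (layers st) (undup (nth [::] (layers st) p ++ [seq t.1.1 | t <- rcv])) in
    State ls (if p.+1 == h then init_pool i inp ls else pool st)
  else State (layers st)
    (undup [seq t <- pool st ++ rcv | t.1.2 \in nth [::] (layers st) (h.*2 - p.+1)]).

(* While layers are built, an ID [a] travels as the item [(a, 0, [::])]. *)
Definition outbox (p : nat) (st : state) : seq item :=
  if p < h then [seq (a, 0, [::]) | a <- nth [::] (layers st) p] else pool st.

Definition frame (p : nat) (st : state) : seq bool :=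
  enc_list max_items item_width (map (enc_item id_width B) (outbox p st)).

Definition slot_bits (hs : seq bool) (p j : nat) : seq bool :=
  take slot_len (drop (p * phase_len + j * slot_len) hs).

Definition received (i p : nat) (hs : seq bool) : seq item :=
  flatten [seq if transmits j i then [::] else
               if manchester_decode frame_len (slot_bits hs p j) is Some s
               then map (dec_item id_width B) (dec_list max_items item_width s) else [::]
          | j <- iota 0 nslots].

Fixpoint state_at (i : nat) (inp : input) (p : nat) (hs : seq bool) : state :=
  if p is p'.+1 then update i inp p' (state_at i inp p' hs) (received i p' hs)
  else State [:: [:: i]] [::].

Definition beep (i : nat) (inp : input) (hs : seq bool) : bool :=
  let r := size hs in let p := r %/ phase_len in let o := r %% phase_len in
  [&& r < nrounds, transmits (o %/ slot_len) i
    & manchester (frame p (state_at i inp p hs)) (o %% slot_len)].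

(* With [B = 0] every message is empty and no round is spent. *)
Definition decide (i : nat) (inp : input) (hs : seq bool) : output :=
  if B == 0 then fun _ => Some [::] else
  fun s => ohead [seq t.2 | t <- pool (state_at i inp nphases hs)
                          & (t.1.1 == s) && (t.1.2 == i)].

Lemma received_take i p m hs :
  p.+1 * phase_len <= m -> received i p (take m hs) = received i p hs.
Proof.
move=> le_m; congr flatten; apply/eq_in_map => j; rewrite mem_iota add0n => /= lt_j.
suff -> : slot_bits (take m hs) p j = slot_bits hs p j by [].
by rewrite /slot_bits !take_drop take_takel // (leq_trans _ le_m) // mulSn /phase_len; nia.
Qed.

Lemma state_at_take i inp p m hs :
  p * phase_len <= m -> state_at i inp p (take m hs) = state_at i inp p hs.
Proof.
elim: p => //= p IH le_m; rewrite received_take // IH //.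
by apply: leq_trans le_m; rewrite leq_mul2r leqnSn orbT.
Qed.

Lemma card_slot_field : Delta * id_width < #|slot_field|.
Proof. by rewrite card_binary_field trunc_log_ltn. Qed.

Lemma transmits_separates x Y :
  x < 2 ^ id_width -> all (fun y => y < 2 ^ id_width) Y -> size Y <= Delta -> x \notin Y ->
  exists2 j, j < nslots & transmits j x && all (fun y => ~~ transmits j y) Y.
Proof. exact: poly_select_separates card_slot_field. Qed.

Lemma card_slot_field_le :
  0 < Delta * id_width -> #|slot_field| <= 2 * (Delta * id_width).
Proof. by move=> pos; rewrite card_binary_field expnS leq_mul2l trunc_logP. Qed.

Lemma size_frame p st : size (frame p st) = frame_len.
Proof. by rewrite /frame size_enc_list. Qed.

Lemma frameK p st :
  size (outbox p st) <= max_items -> all (item_fits id_width B) (outbox p st) ->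
  map (dec_item id_width B) (dec_list max_items item_width (frame p st)) = outbox p st.
Proof.
move=> sz_out fit_out; rewrite /frame enc_listK ?size_map //; last first.
  by apply/allP=> _ /mapP [t _ ->]; rewrite size_enc_item.
rewrite -map_comp -[RHS]map_id; apply/eq_in_map => t t_out /=.
by apply: enc_itemK; move/allP: fit_out; apply.
Qed.

End Algorithm.

Definition simulation := Algorithm nrounds beep decide.

(** * Correctness *)

Section Correctness.
Variables (c n : nat) (e : rel 'I_n) (Delta h B : nat)
          (id : 'I_n -> nat) (inp : 'I_n -> input).
Hypothesis c_gt0 : 0 < c.
Hypothesis e_simple : simple_graph e.
Hypothesis max_deg : max_degree e = Delta.
Hypothesis id_inj : injective id.
Hypothesis id_range : forall v, 1 <= id v <= n ^ c.
Hypothesis inp_size : forall v d m, inp v d = Some m -> size m <= B.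
Hypothesis B_gt0 : 0 < B.
Hypothesis Delta_gt0 : 0 < Delta.
Hypothesis h_gt0 : 0 < h.

Local Notation P := (Params n c Delta h B).
Local Notation hist := (hist e simulation P id inp).
Local Notation W := (id_width P).
Local Notation PL := (phase_len P).
Local Notation SL := (slot_len P).

Definition phase_state (p : nat) (w : 'I_n) : state :=
  state_at P (id w) (inp w) p (hist (p * PL) w).

Lemma nrounds_eq : nrounds P = nphases P * PL.
Proof. by rewrite /nrounds /= !eqn0Ngt B_gt0 Delta_gt0. Qed.

Lemma frame_len_gt0 : 0 < frame_len P.
Proof. by rewrite /frame_len /max_items /= !muln_gt0 expn_gt0 Delta_gt0. Qed.

Lemma phase_len_gt0 : 0 < PL.
Proof.
rewrite /phase_len /slot_len muln_gt0 double_gt0 frame_len_gt0.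
by rewrite expn_gt0 card_binary_field expn_gt0.
Qed.

Lemma deg_le x : #|[set y | e x y]| <= Delta.
Proof. by rewrite -max_deg; apply: (@leq_bigmax _ (fun v => degree e v)). Qed.

Lemma id_lt v : id v < 2 ^ W.
Proof.
have /andP [_ le_id] := id_range v; apply: leq_ltn_trans le_id _.
by rewrite /id_width /log2 /= mulnC expnM ltn_exp2r // trunc_log_ltn.
Qed.

Lemma phase_offset_lt p j o :
  j < nslots P -> o < SL -> p * PL + (j * SL + o) < p.+1 * PL.
Proof. by rewrite /phase_len; move: (nslots P) SL => N S lt_j lt_o; rewrite mulSn; nia. Qed.

Lemma beeps_at p j o w : p < nphases P -> j < nslots P -> o < SL ->
  beeps e simulation P id inp (p * PL + (j * SL + o)) w =
  transmits P j (id w) && manchester (frame P p (phase_state p w)) o.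
Proof.
move=> lt_p lt_j lt_o; have := phase_offset_lt 0 lt_j lt_o; rewrite mul0n mul1n => lt_jo.
rewrite /beeps /= /beep size_hist nrounds_eq.
rewrite (leq_trans (phase_offset_lt p lt_j lt_o)) ?leq_mul2r ?lt_p ?orbT //=.
have SL_gt0 : 0 < SL by rewrite double_gt0 frame_len_gt0.
rewrite modnMDl (modn_small lt_jo) divnMDl ?phase_len_gt0 // (divn_small lt_jo) addn0.
rewrite divnMDl // (divn_small lt_o) addn0 modnMDl (modn_small lt_o).
by rewrite /phase_state -(state_at_take _ _ _ (m := p * PL)) ?take_hist ?leq_addr.
Qed.

Lemma phase_state_succ p v : phase_state p.+1 v =
  update P (id v) (inp v) p (phase_state p v) (received P (id v) p (hist (p.+1 * PL) v)).
Proof.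
rewrite /phase_state /=; congr update.
by rewrite -(state_at_take _ _ _ (m := p * PL)) ?take_hist // leq_mul2r leqnSn orbT.
Qed.

Lemma slot_bits_heard p j o v :
  p < nphases P -> j < nslots P -> o < SL -> ~~ transmits P j (id v) ->
  nth false (slot_bits P (hist (p.+1 * PL) v) p j) o =
  [exists w, (e v w && transmits P j (id w)) && manchester (frame P p (phase_state p w)) o].
Proof.
move=> lt_p lt_j lt_o silent_v.
rewrite /slot_bits nth_take // nth_drop -addnA nth_hist ?phase_offset_lt //.
rewrite beeps_at // (negbTE silent_v) /=; apply: eq_existsb => w.
by rewrite -andbA -beeps_at.
Qed.

Definition outbox_fits (p : nat) := forall w,
  size (outbox P p (phase_state p w)) <= max_items P /\
  all (item_fits W B) (outbox P p (phase_state p w)).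

Lemma received_sound p v t : p < nphases P -> outbox_fits p ->
  t \in received P (id v) p (hist (p.+1 * PL) v) ->
  exists2 w, e v w & t \in outbox P p (phase_state p w).
Proof.
move=> lt_p fits /flatten_mapP [j]; rewrite mem_iota add0n => /= lt_j.
case: ifP => // silent_v; case dec: manchester_decode => [s|] // t_in.
have [w /andP [e_vw _] frame_w] := manchester_decode_sound
  (fun w _ => size_frame P p (phase_state p w))
  (fun o lt_o => slot_bits_heard lt_p lt_j lt_o (negbT silent_v)) frame_len_gt0 dec.
by exists w => //; move: t_in; rewrite -frame_w frameK //; case: (fits w).
Qed.

Lemma received_complete p v w t : p < nphases P -> outbox_fits p -> e v w ->
  t \in outbox P p (phase_state p w) -> t \in received P (id v) p (hist (p.+1 * PL) v).
Proof.
move=> lt_p fits e_vw t_out.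
have neq_vw : v != w by apply: contraTneq e_vw => ->; case: e_simple => _ ->.
pose Y := id v :: [seq id y | y <- enum ([set y | e v y] :\ w)].
have Y_lt : all (fun y => y < 2 ^ W) Y.
  by rewrite /= id_lt; apply/allP=> _ /mapP [y _ ->]; rewrite id_lt.
have Y_size : size Y <= Delta.
  by rewrite /= size_map -cardE; have := deg_le v; rewrite (cardsD1 w) inE e_vw.
have w_Y : id w \notin Y.
  rewrite in_cons negb_or (inj_eq id_inj) eq_sym neq_vw /=.
  apply/mapP=> -[y]; rewrite mem_enum !inE => /andP [neq_yw _] /id_inj eq_wy.
  by rewrite eq_wy eqxx in neq_yw.
have [j lt_j /andP [tr_w /allP silent_Y]] := transmits_separates (id_lt w) Y_lt Y_size w_Y.
have silent_v : transmits P j (id v) = false by apply/negbTE/silent_Y/mem_head.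
apply/flatten_mapP; exists j; first by rewrite mem_iota.
rewrite silent_v (manchester_decode_single (w0 := w)
  (fun w _ => size_frame P p (phase_state p w))
  (fun o lt_o => slot_bits_heard lt_p lt_j lt_o (negbT silent_v))); last 2 first.
- by rewrite e_vw tr_w.
- move=> y /andP [e_vy tr_y]; apply/eqP; apply: contraT => neq_yw.
  have : id y \in Y by rewrite in_cons map_f ?orbT // mem_enum !inE neq_yw e_vy.
  by move/silent_Y; rewrite tr_y.
by rewrite frameK //; case: (fits w).
Qed.

Definition ball_ids (r : nat) (w : 'I_n) : seq nat := [seq id x | x in ball e r w].

Local Notation layer p w r := (nth [::] (layers (phase_state p w)) r).

Definition genuine (t : nat) (w : 'I_n) (tau : item) :=
  (exists2 s, s \in ball e t w & tau.1.1 = id s /\ inp s tau.1.2 = Some tau.2) /\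
  tau.1.2 \in ball_ids (h - t) w.

Definition phase_inv (p : nat) := forall w,
  [/\ size (layers (phase_state p w)) = (minn p h).+1,
      forall r, r <= minn p h -> uniq (layer p w r) /\ layer p w r =i ball_ids r w
    & h <= p -> uniq (pool (phase_state p w)) /\
                {in pool (phase_state p w), forall tau, genuine (p - h) w tau}].

Lemma card_ball_Delta r w : #|ball e r w| <= 2 * Delta ^ r.
Proof. by apply: card_ball => //; [exact: deg_le | case: e_simple]. Qed.

Lemma layer_outbox_fits p w :
  p < h -> uniq (layer p w p) -> layer p w p =i ball_ids p w ->
  size (outbox P p (phase_state p w)) <= max_items P /\
  all (item_fits W B) (outbox P p (phase_state p w)).
Proof.
rewrite /outbox /= => lt_ph uniq_l mem_l; rewrite lt_ph; split.
  have sub_l : {subset layer p w p <= ball_ids p w} by move=> a; rewrite mem_l.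
  rewrite size_map (leq_trans (uniq_leq_size uniq_l sub_l)) //.
  rewrite size_image (leq_trans (card_ball_Delta p w)) // /max_items /=.
  have := leq_pexp2l Delta_gt0 (ltnW lt_ph); lia.
apply/allP=> _ /mapP [a a_in ->]; rewrite /item_fits /= expn_gt0 andbT.
by move: a_in; rewrite mem_l => /imageP [x _ ->]; rewrite id_lt.
Qed.

Lemma pool_outbox_fits p w : h <= p < nphases P -> uniq (pool (phase_state p w)) ->
  {in pool (phase_state p w), forall tau, genuine (p - h) w tau} ->
  size (outbox P p (phase_state p w)) <= max_items P /\
  all (item_fits W B) (outbox P p (phase_state p w)).
Proof.
move=> /andP [le_hp lt_p] uniq_pool gen; rewrite /outbox /= ltnNge le_hp /=.
have le_th : p - h <= h by move: lt_p; rewrite /nphases /=; lia.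
pose f (sd : 'I_n * 'I_n) : item := (id sd.1, id sd.2, odflt [::] (inp sd.1 (id sd.2))).
split.
  have sub : {subset pool (phase_state p w) <=
              image f (setX (ball e (p - h) w) (ball e (h - (p - h)) w))}.
    move=> tau /gen [[s s_in [src_tau inp_tau]] /imageP [d d_in dst_tau]].
    apply/imageP; exists (s, d); first by rewrite inE s_in d_in.
    by move: tau src_tau dst_tau inp_tau => [[a b] m] /= -> -> inp_sd; rewrite /f /= inp_sd.
  rewrite (leq_trans (uniq_leq_size uniq_pool sub)) // size_image cardsX.
  rewrite (leq_trans (leq_mul (card_ball_Delta _ w) (card_ball_Delta _ w))) //.
  by rewrite /max_items /= mulnACA -expnD subnKC.
apply/allP=> tau /gen [[s _ [src_tau inp_tau]] /imageP [d _ dst_tau]].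
by rewrite /item_fits src_tau dst_tau !id_lt (inp_size inp_tau).
Qed.

Lemma phase_inv_fits p : p < nphases P -> phase_inv p -> outbox_fits p.
Proof.
move=> lt_p inv w; have [_ layer_ok pool_ok] := inv w.
case: (ltnP p h) => [lt_ph|le_hp].
  have [] := layer_ok p; first by rewrite leq_min leqnn ltnW.
  exact: layer_outbox_fits.
by have [] := pool_ok le_hp; apply: pool_outbox_fits; rewrite le_hp.
Qed.

Lemma phase_inv0 : phase_inv 0.
Proof.
move=> w; rewrite /phase_state /=; split.
- by rewrite min0n.
- move=> r; rewrite min0n leqn0 => /eqP -> /=; split => // a.
  rewrite inE /ball_ids; apply/eqP/imageP => [->|[x]]; first by exists w; rewrite ?inE.
  by rewrite inE => /eqP ->.
- by rewrite leqNgt h_gt0.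
Qed.

Lemma layer_succ p w : p < h -> phase_inv p ->
  undup (layer p w p ++ [seq t.1.1 | t <- received P (id w) p (hist (p.+1 * PL) w)])
  =i ball_ids p.+1 w.
Proof.
move=> lt_ph inv a.
have lt_p : p < nphases P by rewrite /nphases /=; lia.
have fits := phase_inv_fits lt_p inv.
have mem_layer x : layer p x p =i ball_ids p x.
  by have [_ /(_ p) [|//]] := inv x; rewrite leq_min leqnn ltnW.
rewrite mem_undup mem_cat; apply/orP/imageP => [[|/mapP [t t_rcv ->]]|[x]].
- rewrite mem_layer => /imageP [x x_in ->].
  by exists x => //; apply: (subsetP (ball_subS e p w)).
- have [y e_wy] := received_sound lt_p fits t_rcv.
  rewrite /outbox /= lt_ph => /mapP [b]; rewrite mem_layer => /imageP [x x_in ->] ->.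
  by exists x => //; apply: (subsetP (ball_sub_nbr p e_wy)).
- rewrite /= inE => /orP [x_in ->|/bigcupP [y e_wy x_in] ->].
    by left; rewrite mem_layer image_f.
  right; apply/mapP; exists (id x, 0, [::]) => //.
  apply: (received_complete lt_p fits e_wy).
  by rewrite /outbox /= lt_ph; apply/map_f; rewrite mem_layer image_f.
Qed.

Lemma phase_inv_layer_step p : p < h -> phase_inv p -> phase_inv p.+1.
Proof.
move=> lt_ph inv w; have [size_l layer_ok _] := inv w.
have [mp mp1] : minn p h = p /\ minn p.+1 h = p.+1.
  by split; apply/minn_idPl; rewrite // ltnW.
rewrite mp in size_l layer_ok; rewrite phase_state_succ /update /= lt_ph mp1.
split.
- by rewrite size_rcons size_l.
- move=> r; rewrite leq_eqVlt => /orP [/eqP ->|lt_rp].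
    by rewrite nth_rcons size_l ltnn eqxx undup_uniq; split => //; apply: layer_succ.
  by rewrite nth_rcons size_l lt_rp; apply: layer_ok.
move=> le_hp; have eq_h : p.+1 = h by apply/eqP; rewrite eqn_leq le_hp lt_ph.
rewrite [in p.+1 == h]eq_h eqxx [in p.+1 - h]eq_h subnn; split; first exact: undup_uniq.
move=> tau; rewrite mem_undup mem_pmap => /mapP [d] /=.
rewrite -[X in nth _ _ X]eq_h nth_rcons size_l ltnn eqxx (layer_succ w lt_ph inv) => d_in.
case inp_d: (inp w d) => [m|] //= [->]; split; first by exists w; rewrite ?inE.
by rewrite /= subn0 -eq_h.
Qed.

Lemma phase_inv_pool_step p : h <= p < nphases P -> phase_inv p -> phase_inv p.+1.
Proof.
move=> /andP [le_hp lt_p] inv w; have [size_l layer_ok pool_ok] := inv w.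
have [mp mp1] : minn p h = h /\ minn p.+1 h = h.
  by split; apply/minn_idPr; rewrite // leqW.
have [uniq_pool gen] := pool_ok le_hp; have fits := phase_inv_fits lt_p inv.
rewrite mp in size_l layer_ok; rewrite phase_state_succ /update /= ltnNge le_hp /= mp1.
split=> // _; split=> [|tau]; first exact: undup_uniq.
have le_rh : h.*2 - p.+1 <= h by lia.
have [eq_r eq_t] : h.*2 - p.+1 = h - (p.+1 - h) /\ p.+1 - h = (p - h).+1 by split; lia.
rewrite mem_undup mem_filter (layer_ok _ le_rh).2 eq_r => /andP [dst_in].
rewrite mem_cat => /orP [/gen [[s s_in src_ok] _]|tau_rcv].
  by split=> //; exists s; rewrite // eq_t (subsetP (ball_subS e _ w)).
have [y e_wy] := received_sound lt_p fits tau_rcv.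
have [_ _ /(_ le_hp) [_ gen_y]] := inv y.
rewrite /outbox /= ltnNge le_hp /= => /gen_y [[s s_in src_ok] _].
by split=> //; exists s; rewrite // eq_t (subsetP (ball_sub_nbr _ e_wy)).
Qed.

Lemma phase_invP p : p <= nphases P -> phase_inv p.
Proof.
elim: p => [|p IH] lt_p; first exact: phase_inv0.
have inv := IH (ltnW lt_p); case: (ltnP p h) => [lt_ph|le_hp].
  exact: phase_inv_layer_step.
by apply: phase_inv_pool_step; rewrite ?le_hp.
Qed.

Lemma pool_start u :
  pool (phase_state h u) = init_pool P (id u) (inp u) (layers (phase_state h u)).
Proof.
have := phase_state_succ h.-1 u; rewrite prednK // => ->.
by rewrite /update /= ltn_predL h_gt0 prednK // eqxx.
Qed.

Lemma pool_init u v m : inp u (id v) = Some m -> v \in ball e h u ->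
  (id u, id v, m) \in pool (phase_state h u).
Proof.
move=> inp_uv v_in; rewrite pool_start /init_pool mem_undup mem_pmap.
apply/mapP; exists (id v); last by rewrite /= inp_uv.
have le_h : h <= nphases P by rewrite /nphases /=; lia.
by have [_ /(_ h) [|_ ->]] := phase_invP le_h u; rewrite ?minnn ?image_f.
Qed.

Lemma pool_step t x y tau : t < h -> tau \in pool (phase_state (h + t) x) ->
  y = x \/ e y x -> tau.1.2 \in ball_ids (h - t.+1) y ->
  tau \in pool (phase_state (h + t).+1 y).
Proof.
move=> lt_th tau_x y_x dst_in.
have lt_p : h + t < nphases P by rewrite /nphases /=; lia.
have inv := phase_invP (ltnW lt_p).
have [_ layer_ok _] := inv y; have le_rh : h.*2 - (h + t).+1 <= minn (h + t) h by lia.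
rewrite phase_state_succ /update /= ltnNge leq_addr /= mem_undup mem_filter.
rewrite (layer_ok _ le_rh).2 (_ : h.*2 - (h + t).+1 = h - t.+1) ?dst_in /=; last by lia.
rewrite mem_cat; case: y_x => [->|e_yx]; first by rewrite tau_x.
apply/orP; right; apply: (received_complete lt_p (phase_inv_fits lt_p inv) e_yx).
by rewrite /outbox /= ltnNge leq_addr.
Qed.

Lemma pool_along_path x p t tau : path e x p -> t + size p <= h ->
  tau.1.2 = id (last x p) -> tau \in pool (phase_state (h + t) x) ->
  tau \in pool (phase_state (h + t + size p) (last x p)).
Proof.
elim: p x t => [|y p IH] x t /=; first by rewrite !addn0.
case/andP=> e_xy p_path sz_p dst_tau tau_x.
rewrite addnS -addSn -addnS; apply: IH => //; first by rewrite addSnnS.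
rewrite addnS; apply: (pool_step _ tau_x); first by lia.
  by right; case: e_simple => e_sym _; rewrite e_sym.
by rewrite dst_tau image_f //; apply/mem_ball; exists p; split => //; lia.
Qed.

Lemma pool_stay v t tau : t <= h -> tau.1.2 = id v ->
  tau \in pool (phase_state (h + t) v) -> tau \in pool (phase_state (h + h) v).
Proof.
move=> le_th dst_tau tau_v; rewrite -[X in _ + X](subnKC le_th).
have : t + (h - t) <= h by rewrite subnKC.
elim: (h - t) => [|k IH] le_kh; first by rewrite addn0.
rewrite !addnS; apply: (pool_step _ (IH _)); [lia | lia | by left |].
by rewrite dst_tau image_f // ball_self.
Qed.

Lemma pool_final_sound u v tau : tau \in pool (phase_state (h + h) v) ->
  tau.1.1 = id u -> inp u tau.1.2 = Some tau.2.
Proof.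
have le_p : h + h <= nphases P by rewrite /nphases /= addnn mul2n.
have [_ _ /(_ (leq_addr _ _)) [_ gen]] := phase_invP le_p v.
by move=> /gen [[s _ [-> inp_s]] _] /id_inj <-.
Qed.

Lemma delivered u v m : within_dist e h u v -> inp u (id v) = Some m ->
  final_output e simulation P id inp v (id u) = Some m.
Proof.
move=> [p [p_path p_last sz_p]] inp_uv.
have v_in : v \in ball e h u by apply/mem_ball; exists p.
have tau_v : (id u, id v, m) \in pool (phase_state (h + h) v).
  apply: (@pool_stay _ (size p)) => //; rewrite -p_last -{1}(addn0 h).
  by apply: pool_along_path; rewrite ?p_last ?addn0 ?pool_init.
rewrite /final_output /= /decide (negbTE (lt0n_neq0 B_gt0)) nrounds_eq.
rewrite (_ : nphases P = h + h) -/(phase_state (h + h) v); last first.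
  by rewrite /nphases /= addnn mul2n.
set l := [seq t <- _ | _].
have tau_l : (id u, id v, m) \in l by rewrite mem_filter /= !eqxx.
have l_m : {in l, forall t, t.2 = m}.
  move=> t; rewrite mem_filter => /andP [/andP [/eqP src /eqP dst] t_in].
  by have := pool_final_sound t_in src; rewrite dst inp_uv => -[].
by case: l tau_l l_m => //= t l _ /(_ t (mem_head _ _)) ->.
Qed.

End Correctness.

(** * Round complexity *)

Lemma nrounds_le c n Delta h B : 0 < c ->
  nrounds (Params n c Delta h B) <=
  320 * c ^ 3 * (h * B * Delta ^ (h + 2) * (log2 n).+1 ^ 3).
Proof.
move=> c_gt0; rewrite /nrounds /=.
case: posnP => [|B_gt0] //=; case: posnP => [|Delta_gt0] //=.
set P := Params n c Delta h B; set W := id_width P.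
have W_gt0 : 0 < W by rewrite muln_gt0 c_gt0.
have slots_le : nslots P <= (2 * (Delta * W)) ^ 2.
  by rewrite leq_exp2r // card_slot_field_le // muln_gt0 Delta_gt0.
have width_le : (item_width P).+1 <= 5 * W * B by rewrite /item_width /=; nia.
rewrite /nphases /phase_len /slot_len /frame_len /max_items /= -/W expnD.
apply: leq_trans (_ : 2 * h * ((2 * (Delta * W)) ^ 2 * (4 * Delta ^ h * (5 * W * B)).*2) <= _).
  by rewrite leq_mul2l leq_mul ?orbT // leq_double leq_mul2l width_le orbT.
rewrite /W /id_width /=; nia.
Qed.

Theorem theorem8 :
  exists A : algorithm,
  forall c : nat, 1 <= c ->
  exists (C k : nat),
  forall (n : nat) (e : rel 'I_n) (Delta h B : nat)
         (id : 'I_n -> nat) (inp : 'I_n -> input),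
    simple_graph e ->
    max_degree e = Delta ->
    injective id ->
    (forall v, 1 <= id v <= n ^ c) ->
    (forall v d m, inp v d = Some m -> size m <= B) ->
    let P := Params n c Delta h B in
    (* round complexity O(h * B * Delta^(h+2) * polylog n) *)
    rounds A P <= C * (h * B * Delta ^ (h + 2) * (log2 n).+1 ^ k)
    /\
    (* correctness: every message whose destination is within h hops of its
       source is delivered *)
    (forall (u v : 'I_n) (m : msg), u != v -> within_dist e h u v ->
       inp u (id v) = Some m ->
       final_output e A P id inp v (id u) = Some m).
Proof.
exists simulation => c c_gt0; exists (320 * c ^ 3), 3.
move=> n e Delta h B id inp e_simple max_deg id_inj id_range inp_size /=.
split=> [|u v m neq_uv wd inp_uv]; first exact: nrounds_le.
have [h_gt0 [x e_ux]] := within_dist_neq wd neq_uv.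
have Delta_gt0 : 0 < Delta.
  rewrite -max_deg (leq_trans _ (leq_bigmax u)) // card_gt0.
  by apply/set0Pn; exists x; rewrite inE.
case: (posnP B) => [B_eq0|B_gt0]; last exact: delivered.
have := inp_size _ _ _ inp_uv; rewrite B_eq0 leqn0 size_eq0 => /eqP ->.
by rewrite /final_output /decide /=.
Qed.
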